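(* Let $V\subseteq\mathbb{K}[z_1,\ldots,z_n]$ be a $\mathbb{K}$-linear subspace, where $\mathbb{K}=\mathbb{R}$ or $\mathbb{C}$. (i) If $\mathbb{K}=\mathbb{R}$ and every non-zero element of $V$ is real stable, then $\dim V\le 2$. (ii) If $\mathbb{K}=\mathbb{C}$ and every non-zero element of $V$ is stable, then $\dim V\le1$.
   Context: $H=\{z\in\mathbb{C}:\Im(z)>0\}$; a polynomial is stable if it is non-zero whenever all variables lie in $H$; real stable means stable with real coefficients. *)

From HB Require Import structures.
From mathcomp Require Import all_boot all_order all_algebra.
From mathcomp Require Import mpoly.
From mathcomp Require Import complex.
From mathcomp Require Import reals.
Set Implicit Arguments. Unset Strict Implicit. Unset Printing Implicit Defensive.
Import Order.TTheory GRing.Theory Num.Theory.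
Local Open Scope ring_scope.

Definition stable (R : rcfType) (n : nat) (p : {mpoly R[i][n]}) : Prop :=
  forall z : 'I_n -> R[i], (forall i, 0 < Im (z i)) -> p.@[z] != 0.

Definition real_stable (R : rcfType) (n : nat) (p : {mpoly R[n]}) : Prop :=
  stable (map_mpoly (fun x : R => x%:C%C) p).

Definition is_subspace (K : pzRingType) (M : lmodType K) (V : M -> Prop) : Prop :=
  V 0 /\ forall (a : K) (u v : M), V u -> V v -> V (a *: u + v).

Definition lin_indep (K : pzRingType) (M : lmodType K) (k : nat) (f : 'I_k -> M) : Prop :=
  forall c : 'I_k -> K, \sum_(i < k) c i *: f i = 0 -> forall i, c i = 0.

Definition dim_le (K : pzRingType) (M : lmodType K) (V : M -> Prop) (d : nat) : Prop :=
  forall (k : nat) (f : 'I_k -> M), (forall i, V (f i)) -> lin_indep f -> (k <= d)%N.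

(* Evaluation at the point (i, ..., i) of the upper half-plane is a linear map
   from V to C, and stability says it vanishes on no non-zero element of V.
   Hence V embeds linearly into C, which has dimension 2 over R and 1 over C. *)
From HB Require Import structures.
From mathcomp Require Import all_boot all_order all_algebra.
From mathcomp Require Import mpoly.
From mathcomp Require Import complex.
From mathcomp Require Import reals.
Import Order.TTheory GRing.Theory Num.Theory.
Local Open Scope ring_scope.

Lemma subspace_sum {K : pzRingType} {M : lmodType K} {V : M -> Prop}
    {k : nat} (c : 'I_k -> K) {f : 'I_k -> M} :
  is_subspace V -> (forall i, V (f i)) -> V (\sum_(i < k) c i *: f i).
Proof.
move=> [V0 VS] Vf; apply: (big_ind V) => // [u v Vu Vv|i _].
- by rewrite -[u]scale1r; exact: VS.
- by rewrite -[_ *: _]addr0; exact: VS.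
Qed.

Lemma lin_indep_rV_le (F : fieldType) (m k : nat) (f : 'I_k -> 'rV[F]_m) :
  lin_indep f -> (k <= m)%N.
Proof.
move=> f_indep; pose A := \matrix_i f i.
suff /eqP <- : row_free A by exact: rank_leq_col.
rewrite -kermx_eq0; apply/eqP/row_matrixP => j; rewrite row0; apply/rowP => i.
have /sub_kermxP : (row j (kermx A) <= kermx A)%MS by exact: row_sub.
rewrite mulmx_sum_row; under eq_bigr => l _ do rewrite rowK.
by move/f_indep/(_ i) ->; rewrite mxE.
Qed.

Lemma dim_le_linear_inj (F : fieldType) (M : lmodType F) (V : M -> Prop)
    (m : nat) (L : {linear M -> 'rV[F]_m}) :
  is_subspace V -> (forall p, V p -> L p = 0 -> p = 0) -> dim_le V m.
Proof.
move=> V_sub L_inj k f Vf f_indep; apply: (@lin_indep_rV_le _ _ _ (L \o f)).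
move=> c; under eq_bigr => i _ do rewrite /= -linearZ_LR.
by rewrite -linear_sum => /(L_inj _ (subspace_sum c V_sub Vf)); exact: f_indep.
Qed.

Section EvaluationAtI.
Variables (R : rcfType) (n : nat).

Definition ipoint : 'I_n -> R[i] := fun _ => 'i%C.

Lemma stable_meval_ipoint (p : {mpoly R[i][n]}) : stable p -> p.@[ipoint] != 0.
Proof. by apply=> j; rewrite Im_i ltr01. Qed.

Definition eval_ipoint_row (p : {mpoly R[i][n]}) : 'rV[R[i]]_1 :=
  \row_(j < 1) p.@[ipoint].

Lemma eval_ipoint_row_is_linear : linear eval_ipoint_row.
Proof. by move=> a p q; apply/rowP => j; rewrite !mxE mevalD mevalZ. Qed.

HB.instance Definition _ := GRing.isLinear.Build R[i] {mpoly R[i][n]} 'rV_1 _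
  eval_ipoint_row eval_ipoint_row_is_linear.

Lemma eval_ipoint_row_eq0 (p : {mpoly R[i][n]}) :
  eval_ipoint_row p = 0 -> p.@[ipoint] = 0.
Proof. by move=> /rowP /(_ ord0); rewrite !mxE. Qed.

Definition reim_row (z : R[i]) : 'rV[R]_2 :=
  \row_(j < 2) if j == ord0 then complex.Re z else complex.Im z.

Lemma reim_rowMD (a : R) (x y : R[i]) :
  reim_row (a%:C%C * x + y) = a *: reim_row x + reim_row y.
Proof.
apply/rowP => j; rewrite !mxE.
by case: x y => [x1 x2] [y1 y2]; case: ifP => _ /=; rewrite mul0r ?subr0 ?addr0.
Qed.

Lemma reim_row_eq0 (z : R[i]) : reim_row z = 0 -> z = 0.
Proof.
move=> /rowP z0; have := z0 ord0; have := z0 (lift ord0 ord0); rewrite !mxE /=.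
by case: z {z0} => x y /= -> ->.
Qed.

Definition complexify (p : {mpoly R[n]}) : {mpoly R[i][n]} :=
  map_mpoly (fun x : R => x%:C%C) p.

Definition eval_ipoint_reim (p : {mpoly R[n]}) : 'rV[R]_2 :=
  reim_row (complexify p).@[ipoint].

Lemma eval_ipoint_reim_is_linear : linear eval_ipoint_reim.
Proof.
move=> a p q; rewrite /eval_ipoint_reim /complexify.
by rewrite raddfD /= map_mpolyZ mevalD mevalZ reim_rowMD.
Qed.

HB.instance Definition _ := GRing.isLinear.Build R {mpoly R[n]} 'rV_2 _
  eval_ipoint_reim eval_ipoint_reim_is_linear.

End EvaluationAtI.

Theorem lemma3p2 :
  (forall (R : realType) (n : nat) (V : {mpoly R[n]} -> Prop),
      is_subspace V ->
      (forall p, V p -> p != 0 -> real_stable p) ->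
      dim_le V 2)
  /\
  (forall (R : realType) (n : nat) (V : {mpoly R[i][n]} -> Prop),
      is_subspace V ->
      (forall p, V p -> p != 0 -> stable p) ->
      dim_le V 1).
Proof.
split=> R n V V_sub V_stable.
- apply: (@dim_le_linear_inj _ _ V 2 (eval_ipoint_reim R n) V_sub).
  move=> p Vp /reim_row_eq0/eqP; apply: contraTeq => p_neq0.
  exact/stable_meval_ipoint/V_stable.
- apply: (@dim_le_linear_inj _ _ V 1 (eval_ipoint_row R n) V_sub).
  move=> p Vp /eval_ipoint_row_eq0/eqP; apply: contraTeq => p_neq0.
  exact/stable_meval_ipoint/V_stable.
Qed.
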